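(* Let $\nu\ge 0$ and $K>\nu+1$, and let $\Psi_\nu(x)=I_{\nu+1}(x)/I_\nu(x)$ for $x>0$. Then the equation $$r-\Psi_\nu(2Kr)=0$$ has a positive real solution $r$.
   Context: $I_\nu$ denotes the modified Bessel function of the first kind of order $\nu$. *)

From Stdlib Require Import Reals Arith Factorial.
From Coquelicot Require Import Coquelicot.
Open Scope R_scope.

Definition Gamma (s : R) : R :=
  RInt_gen (fun t => Rpower t (s - 1) * exp (- t)) (at_right 0) (Rbar_locally p_infty).

Definition BesselI (nu x : R) : R :=
  Series (fun k : nat => Rpower (x / 2) (2 * INR k + nu) / (INR (fact k) * Gamma (INR k + nu + 1))).

Definition Psi (nu x : R) : R := BesselI (nu + 1) x / BesselI nu x.

From Stdlib Require Import Reals Factorial Lra Psatz Classical.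
From Coquelicot Require Import Coquelicot.
Open Scope R_scope.

(* Writing [I_mu(x) = (x/2)^mu S_mu((x/2)^2)] with the entire series
   [S_mu(y) = sum_k y^k / (k! Gamma(k + mu + 1))], and [t = K r], the equation
   [r = Psi_nu(2 K r)] becomes [S_nu(t^2) = K S_(nu+1)(t^2)].  The continuous
   function [g = S_nu - K S_(nu+1)] satisfies [g(0) = (1 - K/(nu+1)) / Gamma(nu+1) < 0]
   and [g(K^2) > 0], the latter because [t S_(nu+1)(t^2) < S_nu(t^2)] (that is,
   [Psi_nu < 1]) follows termwise from AM-GM and [Gamma(s+1) = s Gamma(s)].
   The intermediate value theorem then gives a zero [t^2] of [g]. *)

Lemma exp_le_compat x y : x <= y -> exp x <= exp y.
Proof.
intros [Hlt | ->]; [apply Rlt_le, exp_increasing, Hlt | apply Rle_refl].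
Qed.

Lemma Series_ge_0 (a : nat -> R) : (forall n, 0 <= a n) -> ex_series a -> 0 <= Series a.
Proof.
intros Ha Hex; rewrite <- (Rmult_0_l (Series a)), <- Series_scal_l.
apply Series_le; [intros n; rewrite Rmult_0_l; split; [lra | apply Ha] | exact Hex].
Qed.

Lemma filterlim_squeeze_0 {T : Type} {F : (T -> Prop) -> Prop} {FF : Filter F}
  (f g : T -> R) : F (fun x => 0 <= f x <= g x) -> filterlim g F (locally 0) ->
  filterlim f F (locally 0).
Proof.
intros Hfg Hg; apply filterlim_locally; intros eps.
apply (filterlim_locally g 0) with (eps := eps) in Hg.
generalize (filter_and _ _ Hfg Hg); apply filter_imp; intros x [Hb Hx].
change (Rabs (g x - 0) < eps) in Hx; change (Rabs (f x - 0) < eps).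
rewrite Rminus_0_r, Rabs_right in * by lra; lra.
Qed.

Lemma filter_prod_pos_segment (P : R -> Prop) : (forall x, 0 < x -> P x) ->
  filter_prod (at_right 0) (Rbar_locally p_infty)
    (fun ab => forall x, Rmin (fst ab) (snd ab) <= x <= Rmax (fst ab) (snd ab) -> P x).
Proof.
intros HP; apply (Filter_prod _ _ _ (fun a => 0 < a) (fun b => 0 < b)).
- exists (mkposreal 1 Rlt_0_1); intros y _ Hy; exact Hy.
- exists 0; auto.
- intros a b Ha Hb x Hx; apply HP; simpl in Hx.
  assert (0 < Rmin a b) by (apply Rmin_glb_lt; lra); lra.
Qed.

(* [L] is the supremum of the segment integrals, which exists by completeness. *)
Lemma is_RInt_gen_nonneg_bounded (f : R -> R) (M : R) :
  (forall t, 0 < t -> continuous f t) -> (forall t, 0 < t -> 0 <= f t) ->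
  (forall a b, 0 < a <= b -> RInt f a b <= M) ->
  exists L, is_RInt_gen f (at_right 0) (Rbar_locally p_infty) L /\
            forall a b, 0 < a <= b -> RInt f a b <= L.
Proof.
intros Hc Hp HM.
assert (Hex : forall a b, 0 < a -> 0 < b -> ex_RInt f a b).
{ intros a b Ha Hb; apply (ex_RInt_continuous (V := R_CompleteNormedModule)).
  intros z Hz; apply Hc; assert (0 < Rmin a b) by (apply Rmin_glb_lt; lra); lra. }
assert (Hmono : forall a0 b0 a b, 0 < a <= a0 -> a0 <= b0 <= b -> RInt f a0 b0 <= RInt f a b).
{ intros a0 b0 a b Ha Hb.
  rewrite <- (RInt_Chasles f a a0 b), <- (RInt_Chasles f a0 b0 b) by (apply Hex; lra).
  assert (0 <= RInt f a a0) by (apply RInt_ge_0; [lra | apply Hex; lra | intros; apply Hp; lra]).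
  assert (0 <= RInt f b0 b) by (apply RInt_ge_0; [lra | apply Hex; lra | intros; apply Hp; lra]).
  change plus with Rplus; lra. }
set (E := fun v => exists a b, 0 < a <= b /\ v = RInt f a b).
assert (HE : exists v, E v) by (exists (RInt f 1 2), 1, 2; split; [lra | reflexivity]).
destruct (completeness E) as [L [HLub HLleast]].
{ exists M; intros v (a & b & Hab & ->); auto. }
{ exact HE. }
assert (HL : forall a b, 0 < a <= b -> RInt f a b <= L).
{ intros a b Hab; apply HLub; exists a, b; auto. }
exists L; split; [| exact HL].
intros P [eps HP].
assert (Hclose : exists a0 b0, 0 < a0 <= b0 /\ L - eps < RInt f a0 b0).
{ apply NNPP; intros Hn.
  assert (L <= L - eps); [| destruct eps; simpl in *; lra].
  apply HLleast; intros v (a & b & Hab & ->); apply Rnot_lt_le; intros Hlt.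
  apply Hn; exists a, b; auto. }
destruct Hclose as (a0 & b0 & [Ha0 Hab0] & Hlt).
apply (Filter_prod _ _ _ (fun a => 0 < a <= a0) (fun b => b0 <= b)).
- exists (mkposreal a0 Ha0); intros y Hy Hy0; change (Rabs (y - 0) < a0) in Hy.
  apply Rabs_lt_between in Hy; lra.
- exists b0; intros; lra.
- intros a b Ha Hb; exists (RInt f a b); split.
  + apply (RInt_correct (V := R_CompleteNormedModule)), Hex; lra.
  + apply HP; change (Rabs (RInt f a b - L) < eps); apply Rabs_lt_between.
    assert (RInt f a b <= L) by (apply HL; lra).
    assert (RInt f a0 b0 <= RInt f a b) by (apply Hmono; lra).
    lra.
Qed.

Definition Gamma_integrand (s t : R) : R := Rpower t (s - 1) * exp (- t).

Lemma continuous_Gamma_integrand s t : 0 < t -> continuous (Gamma_integrand s) t.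
Proof.
intros Ht; apply (ex_derive_continuous (K := R_AbsRing) (V := R_NormedModule)).
unfold Gamma_integrand, Rpower; auto_derive; lra.
Qed.

Lemma Gamma_integrand_pos s t : 0 < Gamma_integrand s t.
Proof. apply Rmult_lt_0_compat; apply exp_pos. Qed.

(* From [ln u <= u - 1] at [u = t / (2p+1)]. *)
Lemma Rpower_le_exp_half p t : 0 <= p -> 0 < t ->
  Rpower t p <= Rpower (2 * p + 1) p * exp (t / 2).
Proof.
intros Hp Ht; set (q := 2 * p + 1).
assert (Hq : 0 < q) by (unfold q; lra).
assert (Htq : 0 < t / q) by (apply Rdiv_lt_0_compat; lra).
assert (Hln : ln (t / q) <= t / q - 1).
{ assert (H := exp_ineq1_le (ln (t / q))); rewrite exp_ln in H; lra. }
assert (Hlin : p * (t / q) <= t / 2).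
{ apply Rmult_le_reg_r with q; [lra|].
  replace (p * (t / q) * q) with (p * t) by (field; lra); unfold q; nra. }
unfold Rpower; rewrite <- exp_plus; apply exp_le_compat.
replace (ln t) with (ln q + ln (t / q)) by (rewrite ln_div; lra).
nra.
Qed.

Lemma Gamma_integrand_le s t : 1 <= s -> 0 < t ->
  Gamma_integrand s t <= Rpower (2 * s - 1) (s - 1) * exp (- t / 2).
Proof.
intros Hs Ht; unfold Gamma_integrand.
replace (2 * s - 1) with (2 * (s - 1) + 1) by ring.
replace (exp (- t / 2)) with (exp (t / 2) * exp (- t)) by (rewrite <- exp_plus; f_equal; lra).
rewrite <- Rmult_assoc; apply Rmult_le_compat_r; [apply Rlt_le, exp_pos|].
apply Rpower_le_exp_half; lra.
Qed.

Lemma RInt_Gamma_integrand_le s a b : 1 <= s -> 0 < a <= b ->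
  RInt (Gamma_integrand s) a b <= 2 * Rpower (2 * s - 1) (s - 1).
Proof.
intros Hs [Ha Hab]; set (C := Rpower (2 * s - 1) (s - 1)).
assert (HC : 0 < C) by apply exp_pos.
set (F := fun t => - 2 * C * exp (- t / 2)).
assert (HI : is_RInt (fun t => C * exp (- t / 2)) a b (F b - F a)).
{ apply (is_RInt_derive (V := R_CompleteNormedModule)).
  - intros x _; unfold F; auto_derive; [trivial | unfold Rdiv; field].
  - intros x _; apply (ex_derive_continuous (K := R_AbsRing) (V := R_NormedModule)).
    auto_derive; trivial. }
apply Rle_trans with (RInt (fun t => C * exp (- t / 2)) a b).
- apply RInt_le; [lra | | eexists; exact HI | intros x Hx; apply Gamma_integrand_le; lra].
  apply (ex_RInt_continuous (V := R_CompleteNormedModule)); intros z Hz.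
  rewrite Rmin_left in Hz by lra; apply continuous_Gamma_integrand; lra.
- rewrite (is_RInt_unique _ _ _ _ HI); unfold F.
  assert (0 < exp (- b / 2)) by apply exp_pos.
  assert (exp (- a / 2) < 1) by (rewrite <- exp_0; apply exp_increasing; lra).
  nra.
Qed.

Lemma is_RInt_gen_Gamma s : 1 <= s ->
  is_RInt_gen (Gamma_integrand s) (at_right 0) (Rbar_locally p_infty) (Gamma s) /\
  forall a b, 0 < a <= b -> RInt (Gamma_integrand s) a b <= Gamma s.
Proof.
intros Hs.
destruct (is_RInt_gen_nonneg_bounded (Gamma_integrand s) (2 * Rpower (2 * s - 1) (s - 1)))
  as (L & HL & Hsup).
- intros; apply continuous_Gamma_integrand; auto.
- intros; apply Rlt_le, Gamma_integrand_pos.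
- intros; apply RInt_Gamma_integrand_le; auto.
- replace (Gamma s) with L; [split; [exact HL | exact Hsup] |].
  symmetry; unfold Gamma; apply (is_RInt_gen_unique (V := R_CompleteNormedModule)); exact HL.
Qed.

Lemma Gamma_pos s : 1 <= s -> 0 < Gamma s.
Proof.
intros Hs; apply Rlt_le_trans with (RInt (Gamma_integrand s) 1 2).
- apply RInt_gt_0; [lra | intros; apply Gamma_integrand_pos |].
  intros; apply continuous_Gamma_integrand; lra.
- destruct (is_RInt_gen_Gamma s Hs) as [_ Hsup]; apply Hsup; lra.
Qed.

Lemma is_derive_Gamma_integrand_succ s t : 0 < t ->
  is_derive (Gamma_integrand (s + 1)) t (s * Gamma_integrand s t - Gamma_integrand (s + 1) t).
Proof.
intros Ht; unfold Gamma_integrand, Rpower; auto_derive; [lra |].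
replace (s + 1 - 1) with s by ring.
replace ((s - 1) * ln t) with (s * ln t + - ln t) by ring.
rewrite exp_plus, (exp_Ropp (ln t)), exp_ln by lra.
field; lra.
Qed.

Lemma Gamma_integrand_lim_0 s : 2 <= s ->
  filterlim (Gamma_integrand s) (at_right 0) (locally 0).
Proof.
intros Hs; apply filterlim_squeeze_0 with (g := fun t => t).
- exists (mkposreal 1 Rlt_0_1); intros t Ht Ht0.
  change (Rabs (t - 0) < 1) in Ht; rewrite Rminus_0_r, Rabs_right in Ht by lra.
  split; [apply Rlt_le, Gamma_integrand_pos |].
  assert (Hpow : Rpower t (s - 1) <= t).
  { assert (ln t < 0) by (rewrite <- ln_1; apply ln_increasing; lra).
    unfold Rpower; rewrite <- (exp_ln t) at 2 by lra; apply exp_le_compat; nra. }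
  assert (exp (- t) <= 1) by (rewrite <- exp_0; apply exp_le_compat; lra).
  unfold Gamma_integrand; apply Rle_trans with (t * 1); [| lra].
  apply Rmult_le_compat; auto; apply Rlt_le, exp_pos.
- intros P [eps HP]; exists eps; intros t Ht _; apply HP; exact Ht.
Qed.

Lemma filterlim_exp_half_p_infty (C : R) :
  filterlim (fun t => C * exp (- t / 2)) (Rbar_locally p_infty) (locally 0).
Proof.
assert (Hlin : is_lim (fun t => - t / 2) p_infty m_infty).
{ intros P [M HP]; exists (- 2 * M); intros t Ht; apply HP; lra. }
assert (Hexp : is_lim (fun t => exp (- t / 2)) p_infty 0).
{ apply (is_lim_comp exp _ _ _ m_infty is_lim_exp_m Hlin).
  exists 0; intros; discriminate. }
apply (is_lim_scal_l _ C) in Hexp; simpl in Hexp; rewrite Rmult_0_r in Hexp; exact Hexp.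
Qed.

Lemma Gamma_integrand_lim_p_infty s : 1 <= s ->
  filterlim (Gamma_integrand s) (Rbar_locally p_infty) (locally 0).
Proof.
intros Hs; apply filterlim_squeeze_0 with (g := fun t => Rpower (2 * s - 1) (s - 1) * exp (- t / 2)).
- exists 0; intros t Ht; split; [apply Rlt_le, Gamma_integrand_pos |].
  apply Gamma_integrand_le; lra.
- apply filterlim_exp_half_p_infty.
Qed.

(* Integration by parts: [t^s e^-t] vanishes at both ends of (0, +oo). *)
Lemma Gamma_succ s : 1 <= s -> Gamma (s + 1) = s * Gamma s.
Proof.
intros Hs.
set (h := fun t => s * Gamma_integrand s t - Gamma_integrand (s + 1) t).
assert (Hderiv : forall x, 0 < x -> Derive (Gamma_integrand (s + 1)) x = h x).
{ intros x Hx; apply is_derive_unique, is_derive_Gamma_integrand_succ, Hx. }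
assert (Hparts : is_RInt_gen h (at_right 0) (Rbar_locally p_infty) (0 - 0)).
{ apply (is_RInt_gen_ext (Derive (Gamma_integrand (s + 1)))).
  - generalize (filter_prod_pos_segment _ Hderiv); apply filter_imp.
    intros ab H x Hx; apply H; lra.
  - apply is_RInt_gen_Derive.
    + apply filter_prod_pos_segment; intros x Hx; eexists; apply is_derive_Gamma_integrand_succ, Hx.
    + apply filter_prod_pos_segment; intros x Hx.
      apply continuous_ext_loc with h.
      * exists (mkposreal x Hx); intros y Hy; change (Rabs (y - x) < x) in Hy.
        apply Rabs_lt_between in Hy; symmetry; apply Hderiv; lra.
      * apply (continuous_minus (K := R_AbsRing) (V := R_NormedModule)
          (fun t => scal s (Gamma_integrand s t))).
        -- apply (continuous_scal_r (K := R_AbsRing) (V := R_NormedModule)).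
           apply continuous_Gamma_integrand, Hx.
        -- apply continuous_Gamma_integrand, Hx.
    + apply Gamma_integrand_lim_0; lra.
    + apply Gamma_integrand_lim_p_infty; lra. }
assert (Hlin : is_RInt_gen h (at_right 0) (Rbar_locally p_infty) (s * Gamma s - Gamma (s + 1))).
{ apply (is_RInt_gen_minus (V := R_NormedModule)).
  - apply (is_RInt_gen_scal (V := R_NormedModule) (Gamma_integrand s) s), is_RInt_gen_Gamma, Hs.
  - apply is_RInt_gen_Gamma; lra. }
assert (E := is_RInt_gen_unique (V := R_CompleteNormedModule) _ _ Hparts).
rewrite (is_RInt_gen_unique (V := R_CompleteNormedModule) _ _ Hlin) in E; lra.
Qed.

Definition bessel_coef (nu : R) (k : nat) : R := / (INR (fact k) * Gamma (INR k + nu + 1)).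

Definition bessel_series (nu y : R) : R := PSeries (bessel_coef nu) y.

Lemma Gamma_pos_shift nu k : 0 <= nu -> 0 < Gamma (INR k + nu + 1).
Proof. intros Hnu; apply Gamma_pos; generalize (pos_INR k); lra. Qed.

Lemma bessel_coef_pos nu k : 0 <= nu -> 0 < bessel_coef nu k.
Proof.
intros Hnu; apply Rinv_0_lt_compat, Rmult_lt_0_compat.
- apply lt_0_INR, lt_O_fact.
- apply Gamma_pos_shift, Hnu.
Qed.

Lemma bessel_coef_succ nu k : 0 <= nu ->
  bessel_coef nu (S k) = bessel_coef nu k / ((INR k + 1) * (INR k + nu + 1)).
Proof.
intros Hnu; unfold bessel_coef; rewrite fact_simpl, mult_INR, S_INR.
replace (INR k + 1 + nu + 1) with ((INR k + nu + 1) + 1) by ring.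
rewrite Gamma_succ by (generalize (pos_INR k); lra).
assert (0 < INR (fact k)) by apply lt_0_INR, lt_O_fact.
assert (0 < Gamma (INR k + nu + 1)) by apply Gamma_pos_shift, Hnu.
generalize (pos_INR k); intros; field; repeat split; lra.
Qed.

Lemma bessel_coef_shift nu k : 0 <= nu ->
  bessel_coef (nu + 1) k = bessel_coef nu k / (INR k + nu + 1).
Proof.
intros Hnu; unfold bessel_coef.
replace (INR k + (nu + 1) + 1) with ((INR k + nu + 1) + 1) by ring.
rewrite Gamma_succ by (generalize (pos_INR k); lra).
assert (0 < INR (fact k)) by apply lt_0_INR, lt_O_fact.
assert (0 < Gamma (INR k + nu + 1)) by apply Gamma_pos_shift, Hnu.
generalize (pos_INR k); intros; field; repeat split; lra.
Qed.

Lemma CV_radius_bessel_coef nu : 0 <= nu -> CV_radius (bessel_coef nu) = p_infty.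
Proof.
intros Hnu; apply CV_radius_infinite_DAlembert.
- intros n; apply Rgt_not_eq, bessel_coef_pos, Hnu.
- apply is_lim_seq_le_le with (fun _ => 0) (fun n => / (INR n + 1)).
  + intros n; rewrite bessel_coef_succ by exact Hnu.
    assert (0 < bessel_coef nu n) by apply bessel_coef_pos, Hnu.
    assert (0 <= INR n) by apply pos_INR.
    replace (bessel_coef nu n / ((INR n + 1) * (INR n + nu + 1)) / bessel_coef nu n)
      with (/ ((INR n + 1) * (INR n + nu + 1))) by (field; repeat split; lra).
    rewrite Rabs_right by (apply Rle_ge, Rlt_le, Rinv_0_lt_compat; nra).
    split; [apply Rlt_le, Rinv_0_lt_compat; nra | apply Rinv_le_contravar; nra].
  + apply is_lim_seq_const.
  + replace (Finite 0) with (Rbar_inv p_infty) by reflexivity.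
    apply is_lim_seq_inv; [| discriminate].
    apply is_lim_seq_ext with (fun n => INR (S n)); [intros; apply S_INR |].
    apply (is_lim_seq_incr_1 INR), is_lim_seq_INR.
Qed.

Lemma ex_series_bessel_coef nu y : 0 <= nu ->
  ex_series (fun k => bessel_coef nu k * y ^ k).
Proof.
intros Hnu.
assert (H := CV_radius_inside (bessel_coef nu) y ltac:(rewrite CV_radius_bessel_coef; simpl; auto)).
eapply ex_series_ext; [| exact H].
intros n; rewrite pow_n_pow; apply Rmult_comm.
Qed.

Lemma continuity_bessel_series nu : 0 <= nu -> continuity (bessel_series nu).
Proof.
intros Hnu y; apply PSeries_continuity; rewrite CV_radius_bessel_coef by exact Hnu; simpl; auto.
Qed.

Lemma bessel_series_pos nu y : 0 <= nu -> 0 <= y -> 0 < bessel_series nu y.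
Proof.
intros Hnu Hy; unfold bessel_series, PSeries.
rewrite Series_incr_1 by apply ex_series_bessel_coef, Hnu.
assert (0 < bessel_coef nu 0 * y ^ 0) by (rewrite Rmult_1_r; apply bessel_coef_pos, Hnu).
assert (0 <= Series (fun k => bessel_coef nu (S k) * y ^ S k)); [| lra].
apply Series_ge_0.
- intros n; apply Rmult_le_pos; [apply Rlt_le, bessel_coef_pos, Hnu | apply pow_le, Hy].
- apply (ex_series_incr_1 (fun k => bessel_coef nu k * y ^ k)), ex_series_bessel_coef, Hnu.
Qed.

Lemma BesselI_bessel_series mu x : 0 < x ->
  BesselI mu x = Rpower (x / 2) mu * bessel_series mu ((x / 2) ^ 2).
Proof.
intros Hx; unfold bessel_series, PSeries; rewrite <- Series_scal_l; apply Series_ext; intros k.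
rewrite Rpower_plus; replace (2 * INR k) with (INR (2 * k)) by (rewrite mult_INR; simpl; ring).
rewrite Rpower_pow, <- pow_mult by lra.
unfold bessel_coef, Rdiv; ring.
Qed.

Lemma Psi_bessel_series nu x : 0 <= nu -> 0 < x ->
  Psi nu x = x / 2 * bessel_series (nu + 1) ((x / 2) ^ 2) / bessel_series nu ((x / 2) ^ 2).
Proof.
intros Hnu Hx; unfold Psi; rewrite !BesselI_bessel_series by exact Hx.
rewrite Rpower_plus, Rpower_1 by lra.
assert (0 < Rpower (x / 2) nu) by apply exp_pos.
assert (0 < bessel_series nu ((x / 2) ^ 2)) by (apply bessel_series_pos; [exact Hnu | apply pow2_ge_0]).
field; lra.
Qed.

(* With [a = k + 1 <= m = k + nu + 1], the difference of the two sides is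
   [c_k t^(2k) ((t - a)^2 + a (m - a)) / (2 a m)]. *)
Lemma bessel_term_le nu t k : 0 <= nu ->
  t * (bessel_coef (nu + 1) k * (t ^ 2) ^ k)
  <= (bessel_coef nu k * (t ^ 2) ^ k + bessel_coef nu (S k) * (t ^ 2) ^ S k) / 2.
Proof.
intros Hnu; rewrite bessel_coef_shift, bessel_coef_succ by exact Hnu.
assert (Hq : 0 <= bessel_coef nu k * (t ^ 2) ^ k).
{ apply Rmult_le_pos; [apply Rlt_le, bessel_coef_pos, Hnu | apply pow_le, pow2_ge_0]. }
assert (Ha : 1 <= INR k + 1) by (generalize (pos_INR k); lra).
set (a := INR k + 1) in *.
assert (Hm : a <= INR k + nu + 1) by (unfold a; lra).
set (m := INR k + nu + 1) in *.
assert (Hsq : 0 <= (t - a) ^ 2 + a * (m - a)) by (generalize (pow2_ge_0 (t - a)); nra).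
set (X := bessel_coef nu k * (t ^ 2) ^ k * ((t - a) ^ 2 + a * (m - a)) / (2 * a * m)).
assert (HX : 0 <= X).
{ apply Rmult_le_pos; [apply Rmult_le_pos; assumption |].
  apply Rlt_le, Rinv_0_lt_compat; nra. }
apply Rminus_le.
match goal with |- ?D <= 0 => replace D with (- X) by (unfold X; simpl; field; split; lra) end.
lra.
Qed.

(* Summing [bessel_term_le] over [k] gives [S_nu(t^2) - c_0 / 2] on the right. *)
Lemma bessel_series_succ_lt nu t : 0 <= nu -> 0 < t ->
  t * bessel_series (nu + 1) (t ^ 2) < bessel_series nu (t ^ 2).
Proof.
intros Hnu Ht; set (A := fun k => bessel_coef nu k * (t ^ 2) ^ k).
assert (HA : ex_series A) by apply ex_series_bessel_coef, Hnu.
assert (HA1 : ex_series (fun k => A (S k))) by apply (ex_series_incr_1 A), HA.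
assert (HS : bessel_series nu (t ^ 2) = A 0%nat + Series (fun k => A (S k))).
{ apply Series_incr_1, HA. }
assert (HA0 : 0 < A 0%nat) by (unfold A; rewrite Rmult_1_r; apply bessel_coef_pos, Hnu).
assert (Hpair : Series (fun k => (A k + A (S k)) / 2)
                = (bessel_series nu (t ^ 2) + Series (fun k => A (S k))) / 2).
{ unfold Rdiv; rewrite Series_scal_r, Series_plus by assumption; reflexivity. }
change (bessel_series (nu + 1) (t ^ 2))
  with (Series (fun k => bessel_coef (nu + 1) k * (t ^ 2) ^ k)).
rewrite <- Series_scal_l.
apply Rle_lt_trans with (Series (fun k => (A k + A (S k)) / 2)).
- apply Series_le.
  + intros k; split; [| apply bessel_term_le, Hnu].
    apply Rmult_le_pos; [lra |].
    apply Rmult_le_pos; [apply Rlt_le, bessel_coef_pos; lra | apply pow_le, pow2_ge_0].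
  + unfold Rdiv; apply ex_series_scal_r, (ex_series_plus (V := R_NormedModule)); assumption.
- rewrite Hpair, HS; lra.
Qed.

Lemma bessel_series_lt_mul_succ_0 nu K : 0 <= nu -> nu + 1 < K ->
  bessel_series nu 0 < K * bessel_series (nu + 1) 0.
Proof.
intros Hnu HK; unfold bessel_series; rewrite !PSeries_0, bessel_coef_shift by exact Hnu.
assert (0 < bessel_coef nu 0) by apply bessel_coef_pos, Hnu.
simpl INR; apply Rmult_lt_reg_r with (0 + nu + 1); [lra |].
replace (K * (bessel_coef nu 0 / (0 + nu + 1)) * (0 + nu + 1)) with (K * bessel_coef nu 0)
  by (field; lra).
nra.
Qed.

Theorem mainTheorem3 (nu K : R) (hnu : 0 <= nu) (hK : nu + 1 < K) :
  exists r : R, 0 < r /\ r - Psi nu (2 * K * r) = 0.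
Proof.
assert (HK : 0 < K) by lra.
set (g := fun y => bessel_series nu y - K * bessel_series (nu + 1) y).
assert (Hg : continuity g).
{ apply continuity_minus; [| apply continuity_scal]; apply continuity_bessel_series; lra. }
assert (Hg0 : g 0 < 0) by (generalize (bessel_series_lt_mul_succ_0 nu K hnu hK); unfold g; lra).
assert (HgK : 0 < g (K ^ 2)) by (generalize (bessel_series_succ_lt nu K hnu HK); unfold g; lra).
destruct (IVT g 0 (K ^ 2) Hg ltac:(nra) Hg0 HgK) as (z & [Hz0 _] & Hz).
assert (Hzpos : 0 < z) by (destruct Hz0 as [| <-]; [assumption | lra]).
assert (Hsqrt : 0 < sqrt z) by apply sqrt_lt_R0, Hzpos.
assert (Hpos : 0 < bessel_series (nu + 1) z) by (apply bessel_series_pos; lra).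
assert (Hr : 0 < sqrt z / K) by (apply Rdiv_lt_0_compat; assumption).
exists (sqrt z / K); split; [exact Hr |].
rewrite Psi_bessel_series by (assumption || nra).
replace (2 * K * (sqrt z / K) / 2) with (sqrt z) by (field; lra).
rewrite pow2_sqrt by lra.
replace (bessel_series nu z) with (K * bessel_series (nu + 1) z) by (unfold g in Hz; lra).
field; lra.
Qed.
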